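(* Let $f$ be a non-increasing real function on the battery energy states. If $0\le u_1\le u_2\le\epsilon_0$, then $$\sum_{\epsilon_1}p(\epsilon_1|\epsilon_0,u_1)f(\epsilon_1)\le\sum_{\epsilon_2}p(\epsilon_2|\epsilon_0,u_2)f(\epsilon_2),$$ where $p(\epsilon'|\epsilon_0,u)=\Pr\{Q(\epsilon_0-u+E_H)=\epsilon'\}$ is the probability that the battery is in energy state $\epsilon'$ in the next block given current energy $\epsilon_0$ and harvested energy $u$ consumed in the current block.
   Context: Parameters $B_m>0$ and a positive integer $M$. Battery energy states are $\{(2m-1)B_m/(2M): m=1,\dots,M\}$, and the quantizer is $Q(\varepsilon)=\big(2\min\{\lfloor M\min\{\varepsilon,B_m\}/B_m\rfloor+1,M\}-1\big)B_m/(2M)$ for $\varepsilon\ge0$. $E_H$ is a random variable with density $f_{E_H}$ on $[0,E_m]$, $E_m>0$. $\epsilon_0$ is a battery energy state. *)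

From HB Require Import structures.
From mathcomp Require Import all_boot all_order all_algebra.
From mathcomp Require Import all_classical all_reals all_analysis.
Set Implicit Arguments. Unset Strict Implicit. Unset Printing Implicit Defensive.
Import Order.TTheory GRing.Theory Num.Theory.
Local Open Scope classical_set_scope.
Local Open Scope ring_scope.

(* Battery energy states, 0-based index m : 'I_M gives (2(m+1)-1) Bm/(2M). *)
Definition bstate {R : realType} (Bm : R) (M : nat) (m : nat) : R :=
  ((2 * m + 1)%:R * Bm) / (2 * M%:R).

Definition quant {R : realType} (Bm : R) (M : nat) (eps : R) : R :=
  let k : R := Num.min ((Num.floor (M%:R * Num.min eps Bm / Bm))%:~R + 1) M%:R in
  ((2 * k - 1) * Bm) / (2 * M%:R).

Definition ptrans {R : realType} {d} {T : measurableType d}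
  (P : probability T R) (EH : T -> R) (Bm : R) (M : nat) (eps0 u eps' : R) : R :=
  fine (P [set x | quant Bm M (eps0 - u + EH x) = eps']).

From HB Require Import structures.
From mathcomp Require Import all_boot all_order all_algebra.
From mathcomp Require Import all_classical all_reals all_analysis.
From mathcomp Require Import ring lra zify measurable_realfun.
Set Implicit Arguments. Unset Strict Implicit. Unset Printing Implicit Defensive.
Import Order.TTheory GRing.Theory Num.Theory.
Local Open Scope classical_set_scope.
Local Open Scope ring_scope.

(* Coupling argument: drive both next-state variables by the same harvest
   [E_H].  With less energy consumed the pre-quantization level is pointwise
   larger, and [Q] is monotone, so the next state under [u1] dominates the one
   under [u2] sample by sample.  Splitting both distributions along the joint
   law of the two states, every joint outcome contributes a larger value of the
   non-increasing [f] under [u2]. *)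

Section coupling.
Context d (T : measurableType d) (R : realType).

Lemma measure_fin_partition (mu : {measure set T -> \bar R}) (M : nat)
    (C : 'I_M -> set T) (B : set T) :
  measurable B -> (forall n, measurable (C n)) -> trivIset setT C ->
  {ae mu, forall t, exists n, C n t} ->
  mu B = (\sum_(n < M) mu (B `&` C n))%E.
Proof.
move=> mB mC tC [N [mN N0 sN]].
pose U := \big[setU/set0]_(n < M) C n.
have mU : measurable U by apply: bigsetU_measurable => n _.
rewrite (measureDI mu mB mU) [X in (X + _)%E](_ : _ = 0%E) ?add0e; last first.
  apply: (subset_measure0 _ mN) => //; first exact: measurableD.
  move=> t [_ Ut]; apply: sN => -[n Cnt]; apply: Ut.
  by rewrite /U (bigD1 n) //=; left.
rewrite /U (big_endo _ (setIUr B) (setI0 B)).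
rewrite measure_bigsetU_ord // => [n|]; first exact: measurableI.
by move=> i j _ _ [t [[_ Cit] [_ Cjt]]]; apply: tC => //; exists t.
Qed.

Lemma fine_measure_fin_partition (mu : {finite_measure set T -> \bar R})
    (M : nat) (C : 'I_M -> set T) (B : set T) :
  measurable B -> (forall n, measurable (C n)) -> trivIset setT C ->
  {ae mu, forall t, exists n, C n t} ->
  fine (mu B) = \sum_(n < M) fine (mu (B `&` C n)).
Proof.
move=> mB mC tC cover; rewrite (measure_fin_partition mB mC tC cover).
rewrite (eq_bigr (fun n => (fine (mu (B `&` C n)))%:E)) ?sumEFin // => n _.
by rewrite fineK // fin_num_measure //; exact: measurableI.
Qed.

Lemma coupling_sum_le (mu : {finite_measure set T -> \bar R}) (M : nat)
    (s : 'I_M -> R) (X Y : T -> R) (f : R -> R) :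
  injective s -> measurable_fun setT X -> measurable_fun setT Y ->
  (forall t, X t <= Y t) ->
  {ae mu, forall t, exists m, X t = s m} ->
  {ae mu, forall t, exists m, Y t = s m} ->
  (forall m n, s m <= s n -> f (s n) <= f (s m)) ->
  \sum_(m < M) fine (mu [set t | Y t = s m]) * f (s m)
  <= \sum_(m < M) fine (mu [set t | X t = s m]) * f (s m).
Proof.
move=> s_inj mX mY XY Xs Ys f_anti.
have mlevel (Z : T -> R) r : measurable_fun setT Z -> measurable [set t | Z t = r].
  move=> mZ; rewrite -[X in measurable X]setTI.
  exact: (mZ measurableT [set r]) (measurable_set1 r).
have tlevel (Z : T -> R) : trivIset setT (fun m => [set t | Z t = s m]).
  by move=> i j _ _ [t [Zi Zj]]; apply: s_inj; rewrite -Zi -Zj.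
pose a m n := fine (mu ([set t | X t = s m] `&` [set t | Y t = s n])).
have pY n : fine (mu [set t | Y t = s n]) = \sum_(m < M) a m n.
  rewrite (fine_measure_fin_partition (mlevel _ _ mY) (fun m => mlevel _ _ mX)
            (tlevel X) Xs).
  by apply: eq_bigr => m _; rewrite setIC.
have pX m : fine (mu [set t | X t = s m]) = \sum_(n < M) a m n.
  exact: (fine_measure_fin_partition (mlevel _ _ mX) (fun n => mlevel _ _ mY)
           (tlevel Y) Ys).
have a_le m n : a m n * f (s n) <= a m n * f (s m).
  rewrite /a; have [->|/set0P[t [Xt Yt]]] :=
    eqVneq ([set t | X t = s m] `&` [set t | Y t = s n]) set0.
    by rewrite measure0 !mul0r.
  by rewrite ler_wpM2l ?fine_ge0 ?measure_ge0 // f_anti // -Xt -Yt.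
under eq_bigr do rewrite pY mulr_suml.
under [in X in _ <= X]eq_bigr do rewrite pX mulr_suml.
rewrite exchange_big /=.
by apply: ler_sum => m _; apply: ler_sum => n _; exact: a_le.
Qed.

End coupling.

Section quantizer.
Context (R : realType) (Bm : R) (M : nat).
Hypotheses (Bm_gt0 : 0 < Bm) (M_gt0 : (0 < M)%N).

Lemma quant_nondecreasing : {homo quant Bm M : x y / x <= y}.
Proof.
move=> x y hxy; rewrite /quant.
apply: ler_wpM2r; first by rewrite invr_ge0 mulr_ge0 // ler0n.
apply: ler_wpM2r; first exact: ltW.
apply: lerB => //; apply: ler_wpM2l => //.
apply: le_min2 => //; rewrite lerD2r ler_int; apply: le_floor.
apply: ler_wpM2r; first by rewrite invr_ge0 ltW.
apply: ler_wpM2l; first exact: ler0n.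
exact: le_min2.
Qed.

Lemma measurable_quant : measurable_fun setT (quant Bm M).
Proof. exact: nondecreasing_measurable quant_nondecreasing. Qed.

Lemma quant_bstate (x : R) : 0 <= x -> exists n : 'I_M, quant Bm M x = bstate Bm M n.
Proof.
move=> x_ge0; rewrite /quant.
have : 0 <= Num.floor (M%:R * Num.min x Bm / Bm).
  rewrite floor_ge0; apply: divr_ge0; last exact: ltW.
  by apply: mulr_ge0; [exact: ler0n | rewrite le_min x_ge0 ltW].
case: (Num.floor _) => [k|k] // _.
have -> : (Posz k)%:~R + 1 = k.+1%:R :> R by rewrite -natr1.
have [kM|Mk] := leqP k.+1 M.
- exists (Ordinal kM); rewrite /bstate /= min_l ?ler_nat //.
  by congr (_ / _); congr (_ * _); rewrite natrD natrM -addn1 natrD; ring.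
- have M1M : (M.-1 < M)%N by rewrite prednK.
  exists (Ordinal M1M); rewrite /bstate /= min_r; last by rewrite ler_nat ltnW.
  congr (_ / _); congr (_ * _).
  by rewrite natrD natrM -{1}(prednK M_gt0) -addn1 natrD; ring.
Qed.

Lemma bstate_inj : injective (fun m : 'I_M => bstate Bm M m).
Proof.
move=> i j; rewrite /bstate => /(mulIf _) h.
have M2_neq0 : 2 * M%:R != 0 :> R by rewrite mulf_neq0 // ?pnatr_eq0 // -lt0n.
move: (h (invr_neq0 M2_neq0)) => /(mulIf (lt0r_neq0 Bm_gt0)) /eqP.
by rewrite eqr_nat => /eqP ij; apply: val_inj => /=; lia.
Qed.

End quantizer.

Lemma density_ae_ge0 (R : realType) d (T : measurableType d)
    (P : probability T R) (X : {RV P >-> R}) (g : R -> R) (Em : R) :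
  (forall A : set R, measurable A ->
     P (X @^-1` A) =
     (\int[lebesgue_measure]_(x in A `&` [set y : R | (0 <= y <= Em)%R]) (g x)%:E)%E) ->
  {ae P, forall t, 0 <= X t}.
Proof.
move=> hdens; exists (X @^-1` `]-oo, 0[); split.
- exact: measurable_funPTI.
- rewrite hdens //.
  have -> : `]-oo, 0[ `&` [set y : R | (0 <= y <= Em)%R] = set0.
    by apply/seteqP; split => y //= []; rewrite in_itv /= => ? /andP[? _]; lra.
  exact: integral_set0.
- by move=> t /negP; rewrite /= in_itv /= ltNge.
Qed.

Theorem lemma2 (R : realType) (Bm Em : R) (M : nat)
  (d : measure_display) (T : measurableType d) (P : probability T R)
  (EH : {RV P >-> R}) (fEH : R -> R)
  (hBm : 0 < Bm) (hM : (0 < M)%N) (hEm : 0 < Em)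
  (hfEH_ge0 : forall x, 0 <= fEH x)
  (hfEH_meas : measurable_fun setT fEH)
  (hdens : forall A : set R, measurable A ->
     P (EH @^-1` A) = (\int[lebesgue_measure]_(x in A `&` [set y : R | (0 <= y <= Em)%R]) (fEH x)%:E)%E)
  (f : R -> R)
  (hf : forall m n : 'I_M, bstate Bm M m <= bstate Bm M n ->
          f (bstate Bm M n) <= f (bstate Bm M m))
  (m0 : 'I_M) (u1 u2 : R)
  (hu : 0 <= u1) (hu12 : u1 <= u2) (hu2 : u2 <= bstate Bm M m0) :
  \sum_(m < M) ptrans P EH Bm M (bstate Bm M m0) u1 (bstate Bm M m) * f (bstate Bm M m)
  <= \sum_(m < M) ptrans P EH Bm M (bstate Bm M m0) u2 (bstate Bm M m) * f (bstate Bm M m).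
Proof.
set s0 := bstate Bm M m0.
pose next u t := quant Bm M (s0 - u + EH t).
have measurable_next u : measurable_fun setT (next u).
  apply: measurableT_comp; first exact: measurable_quant.
  exact: measurable_funD.
have next_bstate u : u <= s0 -> {ae P, forall t, exists m : 'I_M, next u t = bstate Bm M m}.
  move=> us0; apply: filterS (density_ae_ge0 hdens) => t EHt.
  by apply: (quant_bstate hBm hM); lra.
apply: (coupling_sum_le (bstate_inj hBm hM) (measurable_next u2) (measurable_next u1)).
- by move=> t; apply: quant_nondecreasing => //; rewrite lerD2r lerD2l lerN2.
- exact: next_bstate.
- exact/next_bstate/(le_trans hu12 hu2).
- exact: hf.
Qed.
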